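(* In the setting below, there is a constant $C_1>0$ depending only on $K$ such that for each $f\in D_I$ and $i\in I$ there exist $g=\sum_{n\ge0}g_nt^n\in D_i'$ and $h=\sum_{n\ge0}h_nt^n\in D_i$ with $f=g+h$, $|g|_t\le|f|_t$ and $|h|_t\le|f|_t$; moreover, if $i=1$ then $\|h_n\|<C_1$ for all $n\ge0$, and if $i\ne1$ then $\|g_n\|<C_1$ for all $n\ge0$.
   Context: Let $K$ be a number field with ring of integers $R$; for $x\in K$ put $\|x\|=\max_{\sigma\in\operatorname{Hom}(K,\mathbb{C})}|\sigma(x)|$, and for a subring $S\subseteq K$ let $S\{t\}=\{\sum_{n\ge0}a_nt^n\in S[[t]]:\limsup_n\|a_n\|^{1/n}\le1\}$. Let $I$ be a finite index set containing the symbol $1$, and for each $i\in I$ let $a_i\in R$ be nonzero and not a unit, with $a_iR+a_jR=R$ for distinct $i,j\in I$. For $J\subseteq I$ let $a_J=\prod_{j\in J}a_j$ ($a_\emptyset=1$), $R_J=R[1/a_J]$, and $D_J=R_J\{t\}$ if $1\notin J$, $D_J=R_J[[t]]$ if $1\in J$; all are subrings of $D_I=R_I[[t]]$. For $i\in I$ put $D_i=D_{I\setminus\{i\}}$ and $D_i'=D_{\{i\}}$. $|\cdot|_t=e^{-v_t}$ is the $t$-adic absolute value on $R_I[[t]]$. *)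

From HB Require Import structures.
From mathcomp Require Import all_boot all_order all_algebra all_field.
Set Implicit Arguments. Unset Strict Implicit. Unset Printing Implicit Defensive.
Import Order.TTheory GRing.Theory Num.Theory.
Local Open Scope ring_scope.

(* A number field K is modelled as a finite-dimensional field extension of Q
   (K : fieldExtType rat).  Hom(K, C) is modelled as ring morphisms K -> algC
   (algC = algebraic closure of Q inside C, with the complex modulus `|_|). *)

Definition integral (K : fieldExtType rat) (x : K) : Prop :=
  exists p : {poly int}, p \is monic /\ root (map_poly (fun z : int => z%:~R : K) p) x.

Definition Runit (K : fieldExtType rat) (x : K) : Prop :=
  integral x /\ exists y : K, integral y /\ x * y = 1.

(* x lies in R[1/c] *)
Definition in_loc (K : fieldExtType rat) (c x : K) : Prop :=
  exists n : nat, integral (c ^+ n * x).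

(* ||x|| < C, where ||x|| = max over embeddings of |sigma x| *)
Definition normK_lt (K : fieldExtType rat) (x : K) (C : algC) : Prop :=
  forall s : {rmorphism K -> algC}, `|s x| < C.

(* limsup_n ||a_n||^(1/n) <= 1, unfolded:
   for every eps > 0, eventually ||a_n|| <= (1+eps)^n *)
Definition overconv (K : fieldExtType rat) (f : nat -> K) : Prop :=
  forall e : algC, 0 < e -> exists N : nat, forall n : nat, (N <= n)%N ->
    forall s : {rmorphism K -> algC}, `|s (f n)| <= (1 + e) ^+ n.

Definition aJ (K : fieldExtType rat) (I : finType) (a : I -> K) (J : {set I}) : K :=
  \prod_(j in J) a j.

(* f (a power series sum f_n t^n, given by its coefficients) lies in D_J *)
Definition inD (K : fieldExtType rat) (I : finType) (one : I) (a : I -> K)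
    (J : {set I}) (f : nat -> K) : Prop :=
  (forall n, in_loc (aJ a J) (f n)) /\ (one \notin J -> overconv f).

(* |g|_t <= |f|_t  (t-adic absolute value, |0|_t = 0) *)
Definition tle (K : fieldExtType rat) (g f : nat -> K) : Prop :=
  forall n : nat, (forall m : nat, (m <= n)%N -> f m = 0) -> g n = 0.

From HB Require Import structures.
From mathcomp Require Import all_boot all_order all_algebra all_field.
From mathcomp Require Import ring lra.
From Stdlib Require Import ClassicalEpsilon.
Set Implicit Arguments. Unset Strict Implicit. Unset Printing Implicit Defensive.
Import Order.TTheory GRing.Theory Num.Theory.
Local Open Scope ring_scope.

(* The splitting is made coefficient by coefficient from two facts.
   (1) Partial fractions: a_i and a_(I\i) are comaximal in R, hence so are
       their k-th powers, and u a_i^k + v a_(I\i)^k = 1 splits any x with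
       (a_I)^k x in R as v a_(I\i)^k x + u a_i^k x.
   (2) Approximation: some C > 0 bounds, in every complex embedding, the
       distance from any y in K to R; this uses a Q-basis of K scaled into R
       and Cauchy's bound on roots of monic polynomials.
   Shifting an element of R between the two summands preserves (1), so by (2)
   the prescribed summand can be made bounded by C.  Bounded sequences are
   over-convergent, and splitting 0 as 0 + 0 gives the t-adic estimates. *)

Section RingOfIntegers.
Variable K : fieldExtType rat.

(* [integral] is integrality over Z in the sense of the library, so the ring
   of integers R inherits the closure properties proved there. *)
Lemma integralE (x : K) :
  integral x <-> integralOver (intr : {rmorphism int -> K}) x.
Proof. by split=> [[p [mp rp]]|[p mp rp]]; exists p. Qed.

Lemma rintD (x y : K) : integral x -> integral y -> integral (x + y).
Proof. by move=> /integralE hx /integralE hy; apply/integralE/integral_add. Qed.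

Lemma rintB (x y : K) : integral x -> integral y -> integral (x - y).
Proof. by move=> /integralE hx /integralE hy; apply/integralE/integral_sub. Qed.

Lemma rintM (x y : K) : integral x -> integral y -> integral (x * y).
Proof. by move=> /integralE hx /integralE hy; apply/integralE/integral_mul. Qed.

Lemma rint_int (z : int) : integral (z%:~R : K).
Proof. exact/integralE/(integral_id (intr : {rmorphism int -> K})). Qed.

Lemma rintX (x : K) k : integral x -> integral (x ^+ k).
Proof.
move=> hx; elim: k => [|k IHk]; first by rewrite expr0; apply: (rint_int 1).
by rewrite exprS; apply: rintM.
Qed.

Definition comaximal (a b : K) : Prop :=
  exists u v, integral u /\ integral v /\ u * a + v * b = 1.

Lemma comaximal_sym (a b : K) : comaximal a b -> comaximal b a.
Proof. by move=> [u [v [hu [hv e]]]]; exists v, u; rewrite addrC. Qed.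

Lemma comaximalr1 (a : K) : comaximal a 1.
Proof.
exists 0, 1; rewrite mul0r mul1r add0r.
by split; [apply: (rint_int 0) | split; [apply: (rint_int 1) |]].
Qed.

(* If a is comaximal with b and with c, it is comaximal with b c:
   multiply the two relations u a + v b = 1 and u' a + v' c = 1. *)
Lemma comaximalMr (a b c : K) :
  integral b -> comaximal a b -> comaximal a c -> comaximal a (b * c).
Proof.
move=> hb [u [v [hu [hv e1]]]] [u' [v' [hu' [hv' e2]]]].
exists (u + v * b * u'), (v * v'); split; last split.
- by apply: rintD => //; apply: rintM => //; apply: rintM.
- exact: rintM.
- have E : (u * (u' * a + v' * c) + v * b * u') * a + v * v' * (b * c) =
           (u * a + v * b) * (u' * a + v' * c) by ring.
  by rewrite e2 !mulr1 in E; rewrite E.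
Qed.

Lemma comaximalXl (a b : K) k : integral a -> comaximal a b -> comaximal (a ^+ k) b.
Proof.
move=> ha hab; elim: k => [|k IHk]; first by rewrite expr0; apply/comaximal_sym/comaximalr1.
by rewrite exprS; apply/comaximal_sym/comaximalMr => //; apply: comaximal_sym.
Qed.

Lemma in_locD (c y r : K) : integral c -> integral r -> in_loc c y -> in_loc c (y + r).
Proof.
move=> hc hr [n hn]; exists n; rewrite mulrDr.
by apply: rintD => //; apply: rintM => //; apply: rintX.
Qed.

Lemma in_locB (c y r : K) : integral c -> integral r -> in_loc c y -> in_loc c (y - r).
Proof.
move=> hc hr [n hn]; exists n; rewrite mulrBr.
by apply: rintB => //; apply: rintM => //; apply: rintX.
Qed.

Lemma in_loc0 (c : K) : in_loc c 0.
Proof. by exists 0%N; rewrite mulr0; apply: (rint_int 0). Qed.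

(* Partial fractions: for comaximal A, B in R, R[1/AB] = R[1/A] + R[1/B].
   If (AB)^k x is in R, write u A^k + v B^k = 1; then
   x = v B^k x + u A^k x with A^k (v B^k x) and B^k (u A^k x) in R. *)
Lemma partial_fractions (A B x : K) :
  integral A -> integral B -> comaximal A B -> in_loc (A * B) x ->
  exists y z, [/\ x = y + z, in_loc A y & in_loc B z].
Proof.
move=> hA hB hAB [k hk].
have [u [v [hu [hv E]]]] : comaximal (A ^+ k) (B ^+ k).
  by apply/comaximalXl/comaximal_sym/comaximalXl/comaximal_sym.
exists (v * B ^+ k * x), (u * A ^+ k * x); split.
- by rewrite -[LHS]mul1r -E; ring.
- exists k; have -> : A ^+ k * (v * B ^+ k * x) = v * ((A * B) ^+ k * x).
    by rewrite exprMn; ring.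
  exact: rintM.
- exists k; have -> : B ^+ k * (u * A ^+ k * x) = u * ((A * B) ^+ k * x).
    by rewrite exprMn; ring.
  exact: rintM.
Qed.

End RingOfIntegers.

(* Cauchy's bound: a root z of a monic polynomial q satisfies
   |z| <= 1 + sum_m |q_m|.  For |z| > 1 this follows from
   |z|^n = |sum_(m<n) q_m z^m| <= (sum_(m<n) |q_m|) |z|^(n-1). *)
Lemma root_bound (F : numFieldType) (q : {poly F}) (z : F) :
  q \is monic -> root q z -> `|z| <= 1 + \sum_(m < size q) `|q`_m|.
Proof.
move=> mq rq.
have S0 : 0 <= \sum_(m < size q) `|q`_m| by apply: sumr_ge0 => m _.
case: (real_leP (normr_real z) (real1 F)) => hz.
  by apply: (le_trans hz); rewrite lerDl.
have [n0 szq] : exists n, size q = n.+1.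
  by exists (size q).-1; rewrite prednK // lt0n size_poly_eq0 monic_neq0.
have lq : q`_n0 = 1 by move: mq => /monicP; rewrite /lead_coef szq.
move: rq; rewrite /root horner_coef szq big_ord_recr /= lq.
rewrite mul1r addrC addr_eq0 => /eqP Ez.
case: n0 Ez szq lq => [|n] Ez szq lq.
  by move: Ez; rewrite big_ord0 expr0 oppr0 => /eqP; rewrite oner_eq0.
have hz0 : 0 < `|z| by apply: lt_trans hz.
have key : `|z| ^+ n.+1 <= (\sum_(m < n.+1) `|q`_m|) * `|z| ^+ n.
  rewrite -normrX Ez normrN mulr_suml.
  apply: (le_trans (ler_norm_sum _ _ _)); apply: ler_sum => m _.
  rewrite normrM normrX; apply: ler_wpM2l => //.
  by rewrite ler_eXn2l // -ltnS.
have hzsum : `|z| <= \sum_(m < n.+1) `|q`_m|.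
  by move: key; rewrite exprS ler_pM2r // exprn_gt0.
apply: (le_trans hzsum); rewrite [X in _ <= 1 + X]big_ord_recr /=.
by rewrite addrCA lerDl addr_ge0.
Qed.

Lemma integral_embedding_bound (K : fieldExtType rat) (b : K) : integral b ->
  exists M : algC, 0 <= M /\ forall s : {rmorphism K -> algC}, `|s b| <= M.
Proof.
move=> [p [mp rp]].
pose q : {poly algC} := map_poly intr p.
exists (1 + \sum_(m < size q) `|q`_m|); split.
  by apply: addr_ge0 => //; apply: sumr_ge0 => m _.
move=> s; apply: root_bound; first exact: monic_map.
have -> : q = map_poly s (map_poly (fun z : int => z%:~R : K) p).
  by rewrite -map_poly_comp; apply: eq_map_poly => z /=; rewrite rmorph_int.
by rewrite /root horner_map (rootP rp) rmorph0.
Qed.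

Lemma integral_root_int (K : fieldExtType rat) (P : {poly rat}) (x : K) :
  P \is monic -> P \is a polyOver Num.int -> root (map_poly (in_alg K) P) x ->
  integral x.
Proof.
move=> mP /floorpP[pz EP] rP; subst P; exists pz; split.
  rewrite monicE; move: mP; rewrite monicE (lead_coef_map_inj (@intr_inj rat)) //.
  by move=> /eqP h; apply/eqP; apply: (@intr_inj rat); rewrite h.
have E : map_poly (in_alg K) (map_poly intr pz) = map_poly intr pz.
  by rewrite -map_poly_comp; apply: eq_map_poly => z /=; rewrite -in_algE rmorph_int.
by rewrite E in rP.
Qed.

(* Clearing denominators: if p is monic of degree n with root e, then
   d^n p(X / d) is monic with root d e; its coefficients p_m d^(n-m) are
   integers as soon as d is an integer making every d p_m an integer. *)
Section ScaledPolynomial.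
Variables (n : nat) (p : {poly rat}) (d : rat).
Hypotheses (p_monic : p \is monic) (size_p : size p = n.+1).

Definition scaled_poly : {poly rat} := \poly_(m < n.+1) (p`_m * d ^+ (n - m)).

Let lead_p : p`_n = 1.
Proof. by move: p_monic => /monicP; rewrite /lead_coef size_p. Qed.

Lemma scaled_poly_monic : scaled_poly \is monic.
Proof. by rewrite monicE lead_coef_poly //= subnn expr0 mulr1 lead_p. Qed.

Lemma scaled_poly_int :
  d \is a Num.int -> (forall m : 'I_n.+1, p`_m * d \is a Num.int) ->
  scaled_poly \is a polyOver Num.int.
Proof.
move=> dZ pdZ; apply/polyOverP => m; rewrite coef_poly.
case: ifP => hm; last exact: rpred0.
case: (ltngtP m n) => hmn.
- rewrite -(prednK (_ : 0 < n - m)%N) ?subn_gt0 // exprS mulrA.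
  by apply: rpredM; [exact: (pdZ (Ordinal hm)) | apply: rpredX].
- by move: hm; rewrite ltnS leqNgt hmn.
- by rewrite hmn subnn expr0 mulr1 lead_p; apply: rpred1.
Qed.

Lemma scaled_poly_root (K : fieldExtType rat) (e : K) :
  root (map_poly (in_alg K) p) e ->
  root (map_poly (in_alg K) scaled_poly) (in_alg K d * e).
Proof.
have hs : (size (map_poly (in_alg K) scaled_poly) <= n.+1)%N.
  by rewrite size_map_poly size_poly.
have hs' : (size (map_poly (in_alg K) p) <= n.+1)%N by rewrite size_map_poly size_p.
rewrite /root (horner_coef_wide _ hs) (horner_coef_wide _ hs') => /eqP pe0.
have pe : \sum_(m < n.+1) in_alg K p`_m * e ^+ m = 0.
  by rewrite -[RHS]pe0; apply: eq_bigr => m _; rewrite coef_map.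
rewrite (eq_bigr (fun m : 'I_n.+1 => in_alg K d ^+ n * (in_alg K p`_m * e ^+ m))).
  by rewrite -mulr_sumr pe mulr0.
move=> m _; rewrite !coef_map coef_poly ltn_ord /= -!in_algE.
have -> : in_alg K d ^+ n = in_alg K d ^+ (n - m) * in_alg K d ^+ m.
  by rewrite -exprD subnK // -ltnS.
by rewrite rmorphM rmorphXn exprMn; ring.
Qed.

End ScaledPolynomial.

Lemma integral_multiple (K : fieldExtType rat) (e : K) :
  exists d : rat, d != 0 /\ integral (in_alg K d * e).
Proof.
have [/polyOver1P[p Dp] mp] := (minPolyOver 1 e, monic_minPoly 1 e).
have re : root (map_poly (in_alg K) p) e by rewrite -Dp root_minPoly.
rewrite Dp map_monic in mp.
have [n szp] : exists n, size p = n.+1.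
  by exists (size p).-1; rewrite prednK // lt0n size_poly_eq0 monic_neq0.
pose d : rat := (\prod_(m < n.+1) denq p`_m)%:~R.
exists d; split; first by rewrite intr_eq0; apply/prodf_neq0 => m _; apply: denq_neq0.
apply: (integral_root_int (scaled_poly_monic d mp szp) _ (scaled_poly_root d szp re)).
apply: (scaled_poly_int mp szp); first exact: intr_int.
move=> m; rewrite /d (bigD1 m) //= intrM mulrA -numqE.
by apply: rpredM; apply: intr_int.
Qed.

(* Take a
   Q-basis e_i of K with d_i e_i in R; writing y = sum_i c_i (d_i e_i) and
   rho = sum_i floor(c_i) d_i e_i, the error y - rho has coordinates in [0,1)
   on the d_i e_i, whose embeddings are bounded. *)
Lemma approx_by_integral (K : fieldExtType rat) : exists C : algC, 0 < C /\
  forall y : K, exists rho, integral rho /\ normK_lt (y - rho) C.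
Proof.
pose n := \dim (fullv : {vspace K}); pose e := vbasis (fullv : {vspace K}).
have [d hd] := fin_all_exists (fun i : 'I_n => integral_multiple e`_i).
pose b i := in_alg K (d i) * e`_i.
have [M hM] := fin_all_exists (fun i => integral_embedding_bound (hd i).2).
exists (1 + \sum_i M i); split.
  by apply: (lt_le_trans ltr01); rewrite lerDl; apply: sumr_ge0 => i _; apply: (hM i).1.
move=> y; pose c i := coord e i y / d i.
exists (\sum_i ((Num.floor (c i))%:~R * b i)); split.
  apply: (big_ind (@integral K)); [exact: (rint_int _ 0) | exact: rintD |].
  by move=> i _; apply: rintM; [apply: rint_int | apply: (hd i).2].
have Ey : y = \sum_i c i *: b i.
  rewrite {1}(coord_vbasis (memvf y)); apply: eq_bigr => i _.
  by rewrite /b in_algE mulr_algl scalerA divfK ?(hd i).1.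
move=> s; rewrite {1}Ey -sumrB.
rewrite (eq_bigr (fun i => (c i - (Num.floor (c i))%:~R) *: b i)); last first.
  by move=> i _; rewrite scalerBl scaler_int mulrzl.
rewrite rmorph_sum; apply: (le_lt_trans (ler_norm_sum _ _ _)).
apply: (le_lt_trans (y := \sum_i M i)); last by rewrite ltrDr ltr01.
apply: ler_sum => i _; rewrite rmorphZ_num normrM.
have [fl1 fl2] := andP (floor_itv (c i)).
have h0 : 0 <= ratr (c i - (Num.floor (c i))%:~R) :> algC by rewrite ler0q; lra.
have h1 : ratr (c i - (Num.floor (c i))%:~R) <= 1 :> algC.
  rewrite -(rmorph1 (ratr : {rmorphism rat -> algC})) ler_rat.
  by move: fl2; rewrite intrD; lra.
by rewrite ger0_norm // -[M i]mul1r; apply: ler_pM => //; apply: (hM i).2.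
Qed.

Lemma bernoulli (F : numDomainType) (e : F) n : 0 <= e -> 1 + n%:R * e <= (1 + e) ^+ n.
Proof.
move=> e0; elim: n => [|n IHn]; first by rewrite mul0r addr0 expr0.
rewrite exprSr; apply: (le_trans (y := (1 + n%:R * e) * (1 + e))).
  rewrite -subr_ge0.
  have -> : (1 + n%:R * e) * (1 + e) - (1 + n.+1%:R * e) = n%:R * (e * e).
    by rewrite -addn1 natrD; ring.
  by apply: mulr_ge0 => //; apply: mulr_ge0.
by apply: ler_wpM2r => //; apply: addr_ge0.
Qed.

(* A coefficient sequence bounded in every embedding is over-convergent:
   C <= 1 + n e <= (1 + e)^n as soon as n e >= C. *)
Lemma bounded_overconv (K : fieldExtType rat) (g : nat -> K) (C : algC) :
  (forall n, normK_lt (g n) C) -> overconv g.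
Proof.
move=> hg e e0; pose N := Num.Def.archi_bound (`|C| / e).
exists N => n hn s.
have hgs := hg n s.
have C0 : 0 < C by apply: le_lt_trans hgs.
have hCN : C < N%:R * e.
  rewrite -{1}(gtr0_norm C0) -ltr_pdivrMr //.
  exact: archi_boundP (divr_ge0 (normr_ge0 C) (ltW e0)).
apply/ltW/(lt_trans hgs)/(lt_le_trans hCN)/(le_trans _ (bernoulli n (ltW e0))).
apply: (le_trans (y := n%:R * e)); last by rewrite lerDr.
by apply: ler_wpM2r; [exact: ltW | rewrite ler_nat].
Qed.

Lemma seq_choice (T : Type) (P : nat -> T -> Prop) :
  (forall n, exists x, P n x) -> exists f : nat -> T, forall n, P n (f n).
Proof.
move=> hP; exists (fun n => proj1_sig (constructive_indefinite_description _ (hP n))).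
by move=> n; apply: proj2_sig.
Qed.

Section SeriesSplitting.
Variables (K : fieldExtType rat) (C : algC) (I : finType) (one : I) (a : I -> K).
Hypotheses (C_gt0 : 0 < C)
  (approxC : forall y : K, exists rho, integral rho /\ normK_lt (y - rho) C)
  (a_integral : forall j, integral (a j))
  (a_comaximal : forall j k, j != k -> comaximal (a j) (a k)).
Variable i : I.

Lemma comaximal_complement :
  integral (aJ a (setT :\ i)) /\ comaximal (a i) (aJ a (setT :\ i)).
Proof.
apply: (big_ind (fun b => integral b /\ comaximal (a i) b)).
- by split; [apply: (rint_int _ 1) | apply: comaximalr1].
- by move=> u v [hu cu] [hv cv]; split; [apply: rintM | apply: comaximalMr].
- move=> j; rewrite in_setD1 => /andP[ji _]; split => //.
  by apply: a_comaximal; rewrite eq_sym.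
Qed.

Definition splits (x y z : K) : Prop :=
  [/\ x = y + z, in_loc (a i) y, in_loc (aJ a (setT :\ i)) z,
      x = 0 -> y = 0 /\ z = 0
    & if i == one then normK_lt z C else normK_lt y C].

(* Split by partial fractions, then move the element of R closest to the
   summand to be bounded over to the other summand. *)
Lemma exists_split x : in_loc (aJ a setT) x -> exists yz : K * K, splits x yz.1 yz.2.
Proof.
have normK_lt0 : normK_lt (0 : K) C by move=> s; rewrite rmorph0 normr0.
have [-> _ | x_neq0 hx] := eqVneq x 0.
  exists (0, 0); split; rewrite /= ?addr0 ?if_same //; exact: in_loc0.
have x_nz (P : Prop) : x = 0 -> P by move/eqP; rewrite (negbTE x_neq0).
have [intB comAB] := comaximal_complement.
rewrite /aJ (big_setD1 i) ?in_setT // -/(aJ a _) in hx.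
have [y [z [Exyz ly lz]]] := partial_fractions (a_integral i) intB comAB hx.
rewrite /splits; case: eqP => _.
- have [rho [hr hs]] := approxC z.
  exists (y + rho, z - rho); split => //=.
  + by rewrite Exyz addrACA subrr addr0.
  + exact: in_locD.
  + exact: in_locB.
  + exact: x_nz.
- have [rho [hr hs]] := approxC y.
  exists (y - rho, z + rho); split => //=.
  + by rewrite Exyz addrACA addNr addr0.
  + exact: in_locB.
  + exact: in_locD.
  + exact: x_nz.
Qed.

Lemma series_split (f : nat -> K) : inD one a [set: I] f ->
  exists g h : nat -> K,
    inD one a [set i] g /\ inD one a ([set: I] :\ i) h /\
    (forall n : nat, f n = g n + h n) /\ tle g f /\ tle h f /\
    (i = one -> forall n : nat, normK_lt (h n) C) /\
    (i != one -> forall n : nat, normK_lt (g n) C).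
Proof.
move=> [f_loc _].
have [F HF] := seq_choice (fun n => exists_split (f_loc n)).
exists (fun n => (F n).1), (fun n => (F n).2).
have bound_h : i = one -> forall n, normK_lt (F n).2 C.
  by move=> /eqP io n; have [_ _ _ _] := HF n; rewrite io.
have bound_g : i != one -> forall n, normK_lt (F n).1 C.
  by move=> /negbTE io n; have [_ _ _ _] := HF n; rewrite io.
have zero_split n : (forall m, (m <= n)%N -> f m = 0) -> F n = (0, 0).
  by move=> f0; have [_ _ _ /(_ (f0 n (leqnn n)))[]] := HF n; case: (F n) => ? ? /= -> ->.
split; [split|split; [split|]].
- by move=> n; rewrite /aJ big_set1; have [] := HF n.
- by rewrite in_set1 => io; apply: bounded_overconv (bound_g _); rewrite eq_sym.
- by move=> n; have [] := HF n.
- rewrite in_setD1 in_setT andbT negbK => /eqP/esym io.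
  exact: bounded_overconv (bound_h io).
- split; first by move=> n; have [] := HF n.
  by split; [|split] => // n /zero_split ->.
Qed.

End SeriesSplitting.

Theorem proposition2p16 (K : fieldExtType rat) :
  exists C1 : algC, 0 < C1 /\
  forall (I : finType) (one : I) (a : I -> K),
    (forall i : I, integral (a i) /\ a i != 0 /\ ~ Runit (a i)) ->
    (forall i j : I, i != j ->
       exists u v : K, integral u /\ integral v /\ u * a i + v * a j = 1) ->
    forall (f : nat -> K) (i : I), inD one a [set: I] f ->
    exists g h : nat -> K,
      inD one a [set i] g /\ inD one a ([set: I] :\ i) h /\
      (forall n : nat, f n = g n + h n) /\ tle g f /\ tle h f /\
      (i = one -> forall n : nat, normK_lt (h n) C1) /\
      (i != one -> forall n : nat, normK_lt (g n) C1).
Proof.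
have [C [C_gt0 approxC]] := approx_by_integral K.
exists C; split => // I one a a_props a_comax f i.
have a_integral j : integral (a j) by have [] := a_props j.
exact: (series_split C_gt0 approxC a_integral a_comax).
Qed.
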